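(* For every $n\ge 2$, the tropicalization of the Cayley-Menger variety of $n$ points in $\mathbb{R}^1$ is the set of ultrametrics on $[n]$: $\mathrm{trop}(\mathrm{CM}_n^1)=U_n$.
   Context: Coordinates of $\mathbb{C}^{\binom{[n]}{2}}$ are indexed by pairs $uv$, $u<v$. $\mathrm{CM}_n^1\subseteq\mathbb{C}^{\binom{[n]}{2}}$ is the Zariski closure of $\{((x_u-x_v)^2)_{u<v}: x_1,\dots,x_n\in\mathbb{R}\}$. Tropicalization uses the max convention: with $K=\mathbb{C}\{\!\{t\}\!\}$ the complex Puiseux series field and $\mathrm{val}(a)=-(\text{smallest exponent of }t\text{ in }a)$, for $X\subseteq\mathbb{C}^S$ with ideal $I$, $\mathrm{trop}(X)$ is the Euclidean closure of $\{(\mathrm{val}(x_i))_{i}: x\in V_K(I)\}\cap\mathbb{R}^S$. $\delta\in\mathbb{R}^{\binom{[n]}{2}}$ is an ultrametric if $\delta_{uv}\le\max\{\delta_{uw},\delta_{vw}\}$ for all distinct $u,v,w\in[n]$ (no nonnegativity required); $U_n$ is the set of ultrametrics. *)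

From HB Require Import structures.
From mathcomp Require Import all_boot all_order all_algebra.
From mathcomp Require Import boolp classical_sets fsbigop reals.
From mathcomp Require Import complex.
Set Implicit Arguments. Unset Strict Implicit. Unset Printing Implicit Defensive.
Import Order.TTheory GRing.Theory Num.Theory.
Local Open Scope ring_scope.
Local Open Scope classical_set_scope.

Section CM.
Variable R : realType.
Local Notation C := (R[i]).

(* index set binom([n],2): pairs (u,v) with u < v *)
Definition pairs (n : nat) := {p : 'I_n * 'I_n | (p.1 < p.2)%N}.

(* Polynomials in C[y_s : s in pairs n], as finite lists of terms
   (coefficient, exponent vector). *)
Definition cpoly (n : nat) := seq (C * (pairs n -> nat)).

Definition evalC n (p : cpoly n) (y : pairs n -> C) : C :=
  \sum_(t <- p) t.1 * \prod_(s : pairs n) y s ^+ t.2 s.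

Definition cm_point n (x : 'I_n -> R) : pairs n -> C :=
  fun s => ((x (val s).1 - x (val s).2) ^+ 2)%:C%C.

Definition vanishing_ideal n (A : set (pairs n -> C)) : set (cpoly n) :=
  [set p | forall y, A y -> evalC p y = 0].

Definition zero_locusC n (I : set (cpoly n)) : set (pairs n -> C) :=
  [set y | forall p, I p -> evalC p y = 0].

(* CM_n^1 : the Zariski closure of the image of x |-> ((x_u-x_v)^2) *)
Definition CM n : set (pairs n -> C) :=
  zero_locusC (vanishing_ideal [set cm_point x | x in [set: 'I_n -> R]]).

(* ---- Puiseux series C{{t}} : functions rat -> C (coefficient of t^q)
   whose support lies in (1/N)Z and is bounded below. *)
Definition puiseux (a : rat -> C) : Prop :=
  exists N : nat, (0 < N)%N /\ exists m : rat,
    forall q, a q != 0 -> m <= q /\ exists z : int, q = z%:~R / N%:R.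

Definition constK (c : C) : rat -> C := fun q => if q == 0 then c else 0.
Definition zeroK : rat -> C := constK 0.
Definition oneK : rat -> C := constK 1.
Definition addPS (a b : rat -> C) : rat -> C := fun q => a q + b q.
(* Cauchy product (the sum has finite support when a, b are Puiseux) *)
Definition mulPS (a b : rat -> C) : rat -> C :=
  fun q => (\sum_(r \in [set: rat]) a r * b (q - r))%R.
Definition powPS (a : rat -> C) (k : nat) : rat -> C := iter k (mulPS a) oneK.

Definition evalK n (p : cpoly n) (x : pairs n -> rat -> C) : rat -> C :=
  foldr (fun t acc =>
     addPS (mulPS (constK t.1)
                (foldr (fun s acc' => mulPS (powPS (x s) (t.2 s)) acc') oneK
                       (enum [pred s : pairs n | true]))) acc) zeroK p.

Definition zero_locusK n (I : set (cpoly n)) : set (pairs n -> rat -> C) :=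
  [set x | (forall s, puiseux (x s)) /\ forall p, I p -> evalK p x = zeroK].

(* a <> 0 and q is the smallest exponent of t occurring in a;
   then val(a) = - q (max convention) *)
Definition lowest_exp (a : rat -> C) (q : rat) : Prop :=
  a q != 0 /\ forall r, a r != 0 -> q <= r.

(* trop(X) for X with ideal I: Euclidean closure in R^S of the set of
   valuation vectors of points of V_K(I) with all coordinates nonzero *)
Definition trop_pts n (I : set (cpoly n)) : set (pairs n -> R) :=
  [set d | exists x, zero_locusK I x /\ exists w : pairs n -> rat,
      (forall s, lowest_exp (x s) (- w s)) /\ forall s, d s = ratr (w s)].

Definition euclid_closure n (A : set (pairs n -> R)) : set (pairs n -> R) :=
  [set d | forall e : R, 0 < e -> exists d', A d' /\ forall s, `|d s - d' s| < e].

Definition trop n (X : set (pairs n -> C)) : set (pairs n -> R) :=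
  euclid_closure (trop_pts (vanishing_ideal X)).

Definition dcoord n (d : pairs n -> R) (u v : 'I_n) : R :=
  match @insub _ (fun p : 'I_n * 'I_n => (p.1 < p.2)%N) (pairs n)
           (if (u < v)%N then (u, v) else (v, u)) with
  | Some s => d s | None => 0 end.

Definition ultrametric n (d : pairs n -> R) : Prop :=
  forall u v w : 'I_n, u != v -> u != w -> v != w ->
    dcoord d u v <= Num.max (dcoord d u w) (dcoord d v w).

Definition U n : set (pairs n -> R) := [set d | ultrametric d].

End CM.

(* Three points of a line with squared distances y1, y2, y3 satisfy
   y1^2 + y2^2 + y3^2 = 2 (y1 y2 + y1 y3 + y2 y3).  At a Puiseux point of CM_n^1
   with val y1 > max (val y2, val y3), the monomial y1^2 alone would carry the lowest
   power of t in this relation, which is absurd; so valuation vectors are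
   ultrametrics, and so are their limits.
   Conversely, approximate an ultrametric by one with values level/N, level integral.
   Its balls are nested, so choosing, for each point u and each radius, a
   representative of the ball around u gives real polynomials P_u such that
   P_u - P_v vanishes at 0 to order exactly depth - level(u,v).  A polynomial
   vanishing on CM_n^1 vanishes along the real curve u |-> P_u(tau) / tau^depth,
   hence identically in tau, and tau = t^(1/2N) gives a Puiseux point of CM_n^1
   with valuation vector level/N. *)

From HB Require Import structures.
From mathcomp Require Import all_boot all_order all_algebra.
From mathcomp Require Import boolp classical_sets fsbigop reals.
From mathcomp Require Import complex.
From mathcomp Require Import ring lra zify.
Set Implicit Arguments. Unset Strict Implicit. Unset Printing Implicit Defensive.
Import Order.TTheory GRing.Theory Num.Theory.
Local Open Scope ring_scope.
Local Open Scope classical_set_scope.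

Section InitialTerms.
Variable R : realType.
Local Notation C := R[i].

(* [a] lies in [c t^q + (higher powers of t)]; the coefficient [c] may vanish. *)
Definition initial_term (a : rat -> C) (q : rat) (c : C) :=
  (forall r, a r != 0 -> q <= r) /\ a q = c.

Lemma initial_term_lt a q c r : initial_term a q c -> r < q -> a r = 0.
Proof. by move=> [a_ge _] ltrq; apply/eqP; apply: contraTT ltrq => /a_ge; rewrite -leNgt. Qed.

Lemma zeroKE r : zeroK R r = 0.
Proof. by rewrite /zeroK /constK; case: ifP. Qed.

Lemma initial_term_lowest_exp a q c : initial_term a q c -> c != 0 -> lowest_exp a q.
Proof. by move=> [a_ge aq] c_neq0; split; rewrite ?aq. Qed.

Lemma initial_term_constK c : initial_term (constK c) 0 c.
Proof.
by split=> [r|]; rewrite /constK ?eqxx //; case: (r =P 0) => [->|_] //; rewrite eqxx.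
Qed.

Lemma initial_term_mulPS a b qa qb ca cb :
  initial_term a qa ca -> initial_term b qb cb ->
  initial_term (mulPS a b) (qa + qb) (ca * cb).
Proof.
move=> [a_ge aqa] [b_ge bqb].
have ab0 r q : q < qa + qb -> a r * b (q - r) = 0.
  move=> ltq; have [/eqP ->|/a_ge ler] := boolP (a r == 0); first by rewrite mul0r.
  have [/eqP ->|/b_ge leqr] := boolP (b (q - r) == 0); first by rewrite mulr0.
  by move: (lerD ler leqr); rewrite addrCA subrr addr0 leNgt ltq.
split=> [q|].
  by apply: contraR; rewrite -ltNge => ltq; rewrite /mulPS fsbig1 // => r _; apply: ab0.
rewrite /mulPS -(fsbig_widen [set qa] [set: rat]) //.
  by rewrite fsbig_set1 addrAC subrr add0r aqa bqb.
move=> r [_ /= /eqP neq_r]; rewrite /preimage /=.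
have [/eqP ->|/a_ge ler] := boolP (a r == 0); first by rewrite mul0r.
have [/eqP ->|/b_ge] := boolP (b (qa + qb - r) == 0); first by rewrite mulr0.
by rewrite lerBrDr addrC lerD2r => le_r; move: neq_r; rewrite eq_le le_r ler.
Qed.

Lemma initial_term_powPS a q c k :
  initial_term a q c -> initial_term (powPS a k) (q *+ k) (c ^+ k).
Proof.
move=> init_a; elim: k => [|k IHk]; first exact: initial_term_constK.
by rewrite /powPS iterS -/(powPS a k) mulrS exprS; apply: initial_term_mulPS.
Qed.

Variable n : nat.

Definition monomialK (x : pairs n -> rat -> C) (e : pairs n -> nat) (L : seq (pairs n)) :=
  foldr (fun s acc => mulPS (powPS (x s) (e s)) acc) (@oneK R) L.

Definition termK (x : pairs n -> rat -> C) (t : C * (pairs n -> nat)) :=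
  mulPS (constK t.1) (monomialK x t.2 (enum [pred s : pairs n | true])).

Lemma evalK_sum (p : cpoly R n) x r : evalK p x r = \sum_(t <- p) termK x t r.
Proof.
elim: p => [|t p IHp]; first by rewrite big_nil; apply: zeroKE.
by rewrite big_cons -IHp.
Qed.

Lemma initial_term_termK x q c t :
  (forall s, initial_term (x s) (q s) (c s)) ->
  initial_term (termK x t) (\sum_(s : pairs n) q s *+ t.2 s)
                           (t.1 * \prod_(s : pairs n) c s ^+ t.2 s).
Proof.
move=> init_x; rewrite -[\sum_s _]add0r -!big_enum.
apply: initial_term_mulPS; first exact: initial_term_constK.
elim: (enum _) => [|s L IHL]; first by rewrite !big_nil; apply: initial_term_constK.
by rewrite !big_cons; apply: initial_term_mulPS => //; apply: initial_term_powPS.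
Qed.

Definition mono2 (a : pairs n) (i : nat) (b : pairs n) (j : nat) : pairs n -> nat :=
  fun s => ((s == a) * i + (s == b) * j)%N.

Lemma sum_mono2 (V : nmodType) (f : pairs n -> V) a i b j :
  \sum_(s : pairs n) f s *+ mono2 a i b j s = f a *+ i + f b *+ j.
Proof.
rewrite /mono2; under eq_bigr do rewrite mulrnDr.
rewrite big_split /= (bigD1 a) //= [X in _ + X](bigD1 b) //= !eqxx !mul1n.
by rewrite !big1 ?addr0 // => s /negbTE->; rewrite mul0n mulr0n.
Qed.

Lemma prod_mono2 (V : comPzSemiRingType) (f : pairs n -> V) a i b j :
  \prod_(s : pairs n) f s ^+ mono2 a i b j s = f a ^+ i * f b ^+ j.
Proof.
rewrite /mono2; under eq_bigr do rewrite exprD.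
rewrite big_split /= (bigD1 a) //= [X in _ * X](bigD1 b) //= !eqxx !mul1n.
by rewrite !big1 ?mulr1 // => s /negbTE->; rewrite mul0n expr0.
Qed.

Lemma initial_term_termK_mono2 x q c c0 a i b j :
  (forall s, initial_term (x s) (q s) (c s)) ->
  initial_term (termK x (c0, mono2 a i b j)) (q a *+ i + q b *+ j)
               (c0 * (c a ^+ i * c b ^+ j)).
Proof. by move=> /(initial_term_termK (c0, mono2 a i b j)); rewrite sum_mono2 prod_mono2. Qed.

End InitialTerms.

Definition spair n (u v : 'I_n) : 'I_n * 'I_n := if (u < v)%N then (u, v) else (v, u).

Lemma dcoord_pair n (u v : 'I_n) : u != v -> exists s : pairs n,
  val s = spair u v /\ forall (R : realType) (d : pairs n -> R), dcoord d u v = d s.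
Proof.
move=> neq_uv; rewrite /dcoord -/(spair u v).
case: insubP => [s _ <-|]; first by exists s.
rewrite /spair; case: ifP => /= [-> //|/negbT]; rewrite -leqNgt => le_vu /negP.
by case; rewrite ltn_neqAle le_vu andbT eq_sym.
Qed.

Lemma dcoordC (R : realType) n (d : pairs n -> R) u v : dcoord d u v = dcoord d v u.
Proof. by rewrite /dcoord; case: ltngtP => // /ord_inj->. Qed.

Lemma cm_point_spair (R : realType) n (x : 'I_n -> R) u v (s : pairs n) :
  val s = spair u v -> cm_point x s = ((x u - x v) ^+ 2)%:C%C.
Proof. by rewrite /cm_point /spair => ->; case: ifP => //= _; rewrite -opprB sqrrN. Qed.

Section TropInUltrametrics.
Variables (R : realType) (n : nat).

Definition cm3_poly (s1 s2 s3 : pairs n) : cpoly R n :=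
  [:: (1, mono2 s1 2 s1 0); (1, mono2 s2 2 s2 0); (1, mono2 s3 2 s3 0);
      (-2, mono2 s1 1 s2 1); (-2, mono2 s1 1 s3 1); (-2, mono2 s2 1 s3 1)].

Lemma cm3_poly_vanishing (u v w : 'I_n) (s1 s2 s3 : pairs n) :
  val s1 = spair u v -> val s2 = spair u w -> val s3 = spair v w ->
  vanishing_ideal (@CM R n) (cm3_poly s1 s2 s3).
Proof.
move=> s1E s2E s3E y CMy; apply: CMy => _ [x _ <-].
rewrite /evalC !big_cons big_nil !prod_mono2.
rewrite (cm_point_spair x s1E) (cm_point_spair x s2E) (cm_point_spair x s3E).
rewrite !rmorphXn !rmorphB /=; ring.
Qed.

Lemma trop_pts_ultrametric d :
  trop_pts (vanishing_ideal (@CM R n)) d -> ultrametric d.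
Proof.
move=> [x [[_ x_zero] [w [w_val dE]]]] u v z neq_uv neq_uz neq_vz.
have [s1 [s1E ->]] := dcoord_pair neq_uv.
have [s2 [s2E ->]] := dcoord_pair neq_uz.
have [s3 [s3E ->]] := dcoord_pair neq_vz.
rewrite !dE leNgt gt_max !ltr_rat; apply/negP => /andP[lt21 lt31].
pose q s := - w s.
have init_x s : initial_term (x s) (q s) (x s (q s)) by split=> //; case: (w_val s).
have := x_zero _ (cm3_poly_vanishing s1E s2E s3E).
move=> /(congr1 (fun f => f (q s1 *+ 2 + q s1 *+ 0))).
rewrite evalK_sum /cm3_poly !big_cons big_nil.
have [_ ->] := initial_term_termK_mono2 1 s1 2 s1 0 init_x.
have termK0 c0 a i b j : q s1 *+ 2 + q s1 *+ 0 < q a *+ i + q b *+ j ->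
    termK x (c0, mono2 a i b j) (q s1 *+ 2 + q s1 *+ 0) = 0.
  by move=> lt; apply: initial_term_lt lt; apply: initial_term_termK_mono2 init_x.
rewrite !termK0; [|by rewrite /q; lra..].
rewrite zeroKE !addr0 mul1r expr0 mulr1 => /eqP.
by rewrite sqrf_eq0; case: (w_val s1) => /negbTE->.
Qed.

Lemma euclid_closure_ultrametric (A : set (pairs n -> R)) d :
  A `<=` [set d | ultrametric d] -> euclid_closure A d -> ultrametric d.
Proof.
move=> A_ultra d_cl u v z neq_uv neq_uz neq_vz.
have [s1 [_ dE1]] := dcoord_pair neq_uv.
have [s2 [_ dE2]] := dcoord_pair neq_uz.
have [s3 [_ dE3]] := dcoord_pair neq_vz.
rewrite !dE1 !dE2 !dE3 leNgt gt_max; apply/negP => /andP[lt21 lt31].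
pose e := Num.min ((d s1 - d s2) / 2) ((d s1 - d s3) / 2).
have e_gt0 : 0 < e by rewrite lt_min; apply/andP; split; lra.
have [e2 e3] : e <= (d s1 - d s2) / 2 /\ e <= (d s1 - d s3) / 2.
  by split; rewrite ge_min lexx ?orbT.
have [d' [Ad' near_d']] := d_cl e e_gt0.
have := A_ultra d' Ad' u v z neq_uv neq_uz neq_vz; rewrite !dE1 !dE2 !dE3 le_max.
move: (near_d' s1) (near_d' s2) (near_d' s3); rewrite !ltr_norml.
by move=> /andP[? ?] /andP[? ?] /andP[? ?] /orP[] ?; lra.
Qed.

Lemma trop_CM_sub_U : trop (@CM R n) `<=` U (R:=R) (n:=n).
Proof. by move=> d; apply: euclid_closure_ultrametric => d'; apply: trop_pts_ultrametric. Qed.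

End TropInUltrametrics.

Section PolySeries.
Variables (R : realType) (D : nat).
Hypothesis D_gt0 : (0 < D)%N.
Local Notation C := R[i].
Implicit Types P Q : {poly C}.

Definition series_exp (c k : nat) : rat := (k%:R - c%:R) / D%:R.

(* [poly_series c P] is the Puiseux series [t^(-c/D) P(t^(1/D))]. *)
Definition poly_series (c : nat) (P : {poly C}) : rat -> C :=
  fun q => if q * D%:R + c%:R \is a Num.nat then P`_(Num.truncn (q * D%:R + c%:R)) else 0.

Let D_neq0 : (D%:R : rat) != 0. Proof. by rewrite pnatr_eq0 -lt0n. Qed.

Lemma series_expK c k : series_exp c k * D%:R + c%:R = k%:R.
Proof. by rewrite /series_exp divfK // subrK. Qed.

Lemma series_exp_inj c : injective (series_exp c).
Proof.
move=> k k' /(congr1 (fun q => q * D%:R + c%:R)).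
by rewrite !series_expK => /(can_inj natrK).
Qed.

Lemma series_expD c c' k k' :
  series_exp c k + series_exp c' k' = series_exp (c + c') (k + k').
Proof. by rewrite /series_exp -mulrDl !natrD opprD addrACA. Qed.

Lemma series_expB c c' k m : (k <= m)%N ->
  series_exp (c + c') m - series_exp c k = series_exp c' (m - k).
Proof. by move=> le_km; rewrite -[m in LHS](subnKC le_km) -series_expD addrC addKr. Qed.

Lemma series_expnn c : series_exp c c = 0.
Proof. by rewrite /series_exp subrr mul0r. Qed.

Lemma ler_series_exp c k k' : (k <= k')%N -> series_exp c k <= series_exp c k'.
Proof. by move=> le_kk'; rewrite ler_pM2r ?invr_gt0 ?ltr0n // lerD2r ler_nat. Qed.

Lemma poly_series_exp c P k : poly_series c P (series_exp c k) = P`_k.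
Proof. by rewrite /poly_series series_expK natr_nat natrK. Qed.

Lemma poly_series_out c P q : (forall k, q != series_exp c k) -> poly_series c P q = 0.
Proof.
rewrite /poly_series; case: ifP => // q_nat /(_ (Num.truncn (q * D%:R + c%:R))).
by rewrite /series_exp truncnK // addrK mulfK // eqxx.
Qed.

Lemma poly_seriesP c P q :
  (exists k, q = series_exp c k) \/ poly_series c P q = 0.
Proof.
have [|q_out] := pselect (exists k, q = series_exp c k); [left | right] => //.
by apply: poly_series_out => k; apply/eqP => qE; apply: q_out; exists k.
Qed.

Lemma poly_series_puiseux c P : puiseux (poly_series c P).
Proof.
exists D; split => //; exists (series_exp c 0) => q.
case: (poly_seriesP c P q) => [[k ->] _|->]; last by rewrite eqxx.
by split; [apply: ler_series_exp | exists (k%:Z - c%:Z); rewrite intrB].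
Qed.

Lemma initial_term_poly_series c P k : (forall i, (i < k)%N -> P`_i = 0) ->
  initial_term (poly_series c P) (series_exp c k) P`_k.
Proof.
move=> P_low; split=> [r|]; last exact: poly_series_exp.
case: (poly_seriesP c P r) => [[j ->]|->]; last by rewrite eqxx.
rewrite poly_series_exp => Pj_neq0; apply: ler_series_exp; rewrite leqNgt.
by apply: contra Pj_neq0 => /P_low ->.
Qed.

Lemma poly_seriesD c P Q :
  addPS (poly_series c P) (poly_series c Q) = poly_series c (P + Q).
Proof. by apply/funext => q; rewrite /addPS /poly_series; case: ifP; rewrite ?coefD ?addr0. Qed.

Lemma poly_series0 c : poly_series c 0 = zeroK R.
Proof. by apply/funext => q; rewrite zeroKE /poly_series coef0; case: ifP. Qed.

Lemma poly_series_const a : poly_series 0 a%:P = constK a.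
Proof.
apply/funext => q; rewrite /constK; case: eqP => [->|q_neq0].
  by rewrite -[X in poly_series _ _ X](series_expnn 0) poly_series_exp coefC.
case: (poly_seriesP 0 a%:P q) => [[k qE]|//]; rewrite qE poly_series_exp coefC.
by case: eqP => // k0; move: q_neq0; rewrite qE k0 series_expnn.
Qed.

Lemma poly_seriesXnM c m P : poly_series c P = poly_series (c + m) ('X^m * P).
Proof.
apply/funext => q; case: (poly_seriesP c P q) => [[k ->]|Pq0].
  rewrite poly_series_exp -[series_exp c k]addr0 -(series_expnn m) series_expD.
  by rewrite poly_series_exp coefXnM ltnNge leq_addl addnK.
rewrite Pq0; case: (poly_seriesP (c + m) ('X^m * P) q) => [[j qE]|//].
rewrite qE poly_series_exp coefXnM; case: ltnP => //= le_mj.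
move: Pq0; rewrite qE -(subnK le_mj) -series_expD series_expnn addr0.
by rewrite poly_series_exp addnK.
Qed.

Lemma mulPS_poly_series c P b q K : (size P <= K)%N ->
  mulPS (poly_series c P) b q = \sum_(0 <= k < K) P`_k * b (q - series_exp c k).
Proof.
move=> le_PK; rewrite /mulPS fsbig_supp (fsbig_fwiden [seq series_exp c k | k <- iota 0 K]).
- rewrite big_map /index_iota subn0.
  by apply: eq_bigr => k _; rewrite poly_series_exp.
- move=> r [_]; rewrite /preimage /=; case: (poly_seriesP c P r) => [[k ->]|->]; last first.
    by rewrite mul0r.
  rewrite poly_series_exp => Pkb_neq0; rewrite /= map_f // mem_iota /= add0n.
  rewrite ltnNge; apply/negP => le_Kk; apply: Pkb_neq0.
  by rewrite nth_default ?mul0r // (leq_trans le_PK).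
- by rewrite map_inj_uniq ?iota_uniq //; apply: series_exp_inj.
- by move=> r [_ r_supp]; rewrite /preimage /=; apply: contrapT => ?; apply: r_supp.
Qed.

Lemma poly_seriesM c c' P Q :
  mulPS (poly_series c P) (poly_series c' Q) = poly_series (c + c') (P * Q).
Proof.
apply/funext => q.
have [[m ->]|q_out] := pselect (exists m, q = series_exp (c + c') m); last first.
  have out j : q != series_exp (c + c') j by apply/eqP => qE; apply: q_out; exists j.
  rewrite (mulPS_poly_series _ _ _ (leqnn _)) poly_series_out // big1 // => k _.
  rewrite poly_series_out ?mulr0 // => j; apply: contra (out (k + j)%N) => /eqP qE.
  by rewrite -series_expD -qE addrC subrK.
rewrite (mulPS_poly_series _ _ _ (leq_addr m.+1 (size P))) poly_series_exp coefM.
rewrite (@big_cat_nat _ _ _ m.+1 0 (size P + m.+1)) ?leq_addl //=.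
rewrite [X in _ + X]big1_seq ?addr0.
  rewrite big_mkord; apply: eq_bigr => k _.
  by rewrite series_expB ?poly_series_exp // -ltnS.
move=> k /andP[_]; rewrite mem_index_iota => /andP[lt_mk _].
rewrite poly_series_out ?mulr0 // => j; apply/eqP => /(canRL (subrK _)).
rewrite addrC series_expD => /series_exp_inj mE.
by move: lt_mk; rewrite mE ltnNge leq_addr.
Qed.

Lemma poly_seriesX c P k : powPS (poly_series c P) k = poly_series (c * k) (P ^+ k).
Proof.
elim: k => [|k IHk]; first by rewrite muln0 expr0 poly_series_const.
by rewrite /powPS iterS -/(powPS _ k) IHk poly_seriesM mulnS exprS.
Qed.

End PolySeries.

Lemma all_leq_sum (T : Type) (f : T -> nat) (p : seq T) :
  all (fun t => f t <= \sum_(t' <- p) f t')%N p.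
Proof.
elim: p => [|t p IHp] //=; rewrite big_cons leq_addr /=.
by apply: sub_all IHp => t' /leq_trans; apply; apply: leq_addl.
Qed.

Section HomogPoly.
Variables (R : realType) (n : nat).
Local Notation C := R[i].
Implicit Types (Y : pairs n -> {poly C}) (p : cpoly R n).

Definition wdeg (cc : nat) (e : pairs n -> nat) : nat := \sum_(s : pairs n) cc * e s.

(* [X^G p(Y / X^cc)], a polynomial as soon as every monomial of [p] has
   weighted degree [wdeg cc] at most [G]. *)
Definition homog_poly Y (cc G : nat) p : {poly C} :=
  \sum_(t <- p) 'X^(G - wdeg cc t.2) * (t.1%:P * \prod_(s : pairs n) Y s ^+ t.2 s).

Lemma homog_poly_horner Y cc G p (z : C) (y : pairs n -> C) :
  (forall s, (Y s).[z] = y s * z ^+ cc) -> all (fun t => wdeg cc t.2 <= G)%N p ->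
  (homog_poly Y cc G p).[z] = z ^+ G * evalC p y.
Proof.
move=> Y_horner; elim: p => [|t p IHp].
  by rewrite /homog_poly /evalC !big_nil horner0 mulr0.
move=> /= /andP[le_tG le_pG]; rewrite /homog_poly /evalC !big_cons hornerD.
rewrite IHp // mulrDr; congr (_ + _).
rewrite hornerM hornerXn hornerM hornerC horner_prod.
under eq_bigr do rewrite horner_exp Y_horner exprMn.
rewrite big_split /= prodrXr -exprM.
have -> : (cc * \sum_s t.2 s)%N = wdeg cc t.2 by rewrite /wdeg big_distrr.
by rewrite -[in RHS](subnK le_tG) exprD; ring.
Qed.

Variables (D : nat) (D_gt0 : (0 < D)%N).
Variables (y : pairs n -> rat -> C) (cc : nat) (Y : pairs n -> {poly C}).
Hypothesis yE : forall s, y s = poly_series D cc (Y s).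

Lemma poly_series_termK t :
  termK y t = poly_series D (wdeg cc t.2) (t.1%:P * \prod_(s : pairs n) Y s ^+ t.2 s).
Proof.
rewrite /termK -(poly_series_const D_gt0) -[wdeg _ _]add0n -poly_seriesM //.
congr mulPS; rewrite /wdeg -!big_enum /=; elim: (enum _) => [|s L IHL].
  by rewrite !big_nil poly_series_const.
by rewrite /= IHL yE poly_seriesX // poly_seriesM // !big_cons.
Qed.

Lemma evalK_poly_series p G : all (fun t => wdeg cc t.2 <= G)%N p ->
  evalK p y = poly_series D G (homog_poly Y cc G p).
Proof.
elim: p => [|t p IHp]; first by rewrite /homog_poly big_nil poly_series0.
move=> /= /andP[le_tG le_pG]; rewrite -/(evalK p y) IHp // -/(termK y t).
rewrite poly_series_termK (poly_seriesXnM D_gt0 _ (G - wdeg cc t.2)) subnKC //.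
by rewrite poly_seriesD /homog_poly big_cons.
Qed.

End HomogPoly.

Section RealCurves.
Variables (R : realType) (n : nat).
Local Notation C := R[i].

Definition sqdiff_poly (Pr : 'I_n -> {poly R}) (s : pairs n) : {poly C} :=
  map_poly (real_complex R) ((Pr (val s).1 - Pr (val s).2) ^+ 2).

Lemma sqdiff_poly_horner Pr M (tau : R) s : tau != 0 ->
  (sqdiff_poly Pr s).[tau%:C%C] =
    cm_point (fun u => (Pr u).[tau] / tau ^+ M) s * tau%:C%C ^+ (2 * M).
Proof.
move=> tau_neq0; rewrite horner_map /cm_point -!rmorphXn -rmorphM /=; congr (_%:C%C).
have tauM_neq0 : tau ^+ M != 0 by rewrite expf_neq0.
by rewrite mulnC exprM horner_exp hornerD hornerN; field.
Qed.

Lemma CM_cm_point (x : 'I_n -> R) : CM (cm_point x).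
Proof. by move=> p p_van; apply: p_van; exists x. Qed.

Lemma homog_poly_sqdiff_eq0 Pr M G (p : cpoly R n) :
  vanishing_ideal (@CM R n) p -> all (fun t => wdeg (2 * M) t.2 <= G)%N p ->
  homog_poly (sqdiff_poly Pr) (2 * M) G p = 0.
Proof.
move=> p_van le_pG; apply/eqP; apply: contraT => Q_neq0.
set Q := homog_poly _ _ _ _ in Q_neq0 *.
pose x (k : nat) (u : 'I_n) : R := (Pr u).[k.+1%:R] / k.+1%:R ^+ M.
have Q_root k : root Q (k.+1%:R : R)%:C%C.
  rewrite /root (homog_poly_horner (y := cm_point (x k))) //.
    by rewrite p_van ?mulr0 //; apply: CM_cm_point.
  by move=> s; apply: sqdiff_poly_horner; rewrite pnatr_eq0.
have := max_poly_roots Q_neq0 (rs := [seq (k.+1%:R : R)%:C%C | k <- iota 0 (size Q)]).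
rewrite size_map size_iota ltnn; apply; first by apply/allP => _ /mapP[k _ ->].
by rewrite map_inj_uniq ?iota_uniq // => k k' /complexI /eqP; rewrite eqr_nat eqSS => /eqP.
Qed.

End RealCurves.

Lemma pick_rep_eq (T : finType) (r : rel T) :
  reflexive r -> symmetric r -> transitive r ->
  forall u v, (odflt u [pick w | r u w] == odflt v [pick w | r v w]) = r u v.
Proof.
move=> r_refl r_sym r_trans.
have r_rep u : r u (odflt u [pick w | r u w]) by case: pickP.
move=> u v; apply/eqP/idP => [rep_uv|r_uv].
  by apply: r_trans (r_rep u) _; rewrite rep_uv r_sym r_rep.
have -> : [pick w | r u w] = [pick w | r v w].
  by apply: eq_pick => w; apply/idP/idP; apply: r_trans; rewrite // r_sym.
by case: pickP => // /(_ v); rewrite r_refl.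
Qed.

Section UltrametricCurve.
Variables (R : realType) (n : nat) (d : pairs n -> R) (N : nat).
Hypotheses (d_ultra : ultrametric d) (N_gt0 : (0 < N)%N).

Definition level (s : pairs n) : int := Num.floor (N%:R * d s).

Definition depth : nat := \sum_(s : pairs n) `|level s|%N.

Definition near (L : nat) : rel 'I_n :=
  fun u v => (u == v) || (Num.floor (N%:R * dcoord d u v) <= depth%:Z - L%:Z).

Lemma near_trans L : transitive (near L).
Proof.
move=> w u v; rewrite /near; case: (eqVneq u w) => [->|neq_uw] //=.
case: (eqVneq w v) => [<-|neq_wv]; first by move=> ->; rewrite orbT.
case: (eqVneq u v) => //= neq_uv le_uw le_wv.
have := d_ultra neq_uv neq_uw; rewrite eq_sym => /(_ neq_wv); rewrite le_max.
case/orP => [le_uv|le_uv]; [apply: le_trans le_uw | apply: le_trans le_wv].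
  by apply: le_floor; apply: ler_wpM2l.
by rewrite [dcoord d w v]dcoordC; apply: le_floor; apply: ler_wpM2l.
Qed.

Definition ball_rep (L : nat) (u : 'I_n) : 'I_n := odflt u [pick w | near L u w].

Lemma ball_rep_eq L u v : (ball_rep L u == ball_rep L v) = near L u v.
Proof.
apply: pick_rep_eq; last exact: near_trans.
  by move=> w; rewrite /near eqxx.
by move=> w w'; rewrite /near dcoordC eq_sym.
Qed.

Lemma near_pair L (s : pairs n) :
  near L (val s).1 (val s).2 = (level s <= depth%:Z - L%:Z).
Proof.
have lt_s : ((val s).1 < (val s).2)%N := valP s.
have neq_s : (val s).1 != (val s).2 by rewrite neq_ltn lt_s.
have [s' [s'E ds']] := dcoord_pair neq_s.
have s's : s' = s by apply: val_inj; rewrite s'E /spair lt_s; case: (val s).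
by rewrite /near (negbTE neq_s) ds' s's.
Qed.

Definition curve_poly (u : 'I_n) : {poly R} :=
  \poly_(j < (2 * depth).+1) (ball_rep j.+1 u : nat)%:R.

Lemma curve_poly_coefB (s : pairs n) j : (j <= 2 * depth)%N ->
  ((curve_poly (val s).1 - curve_poly (val s).2)`_j == 0) =
  (level s <= depth%:Z - j.+1%:Z).
Proof.
move=> le_j; rewrite coefB !coef_poly ltnS le_j subr_eq0 eqr_nat -near_pair.
by rewrite -ball_rep_eq.
Qed.

Definition curve (s : pairs n) : rat -> R[i] :=
  poly_series (2 * N) (2 * depth) (sqdiff_poly curve_poly s).

Let N2_gt0 : (0 < 2 * N)%N. Proof. by rewrite muln_gt0. Qed.

Lemma curve_in_zero_locus : zero_locusK (vanishing_ideal (@CM R n)) curve.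
Proof.
split=> [s|p p_van]; first exact: poly_series_puiseux.
have le_p := all_leq_sum (fun t => wdeg (2 * depth) t.2) p.
rewrite (evalK_poly_series N2_gt0 (y := curve) (fun s => erefl) le_p).
by rewrite homog_poly_sqdiff_eq0 // poly_series0.
Qed.

Lemma curve_lowest_exp s : lowest_exp (curve s) (- ((level s)%:~R / N%:R)).
Proof.
have le_level : (`|level s| <= depth)%N by rewrite /depth (bigD1 s) //= leq_addr.
pose k := `|depth%:Z - level s|%N.
pose Del := map_poly (real_complex R) (curve_poly (val s).1 - curve_poly (val s).2).
have Del_coef j : (j <= 2 * depth)%N -> (Del`_j == 0) = (level s <= depth%:Z - j.+1%:Z).
  by move=> le_j; rewrite coef_map fmorph_eq0 curve_poly_coefB.
pose x := poly_series (2 * N) depth Del; pose q := series_exp (2 * N) depth k.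
have init_x : initial_term x q Del`_k.
  by apply: initial_term_poly_series => // j lt_jk; apply/eqP; rewrite Del_coef; lia.
have -> : curve s = mulPS x x.
  by rewrite poly_seriesM // addnn -mul2n /curve /sqdiff_poly rmorphXn expr2.
have -> : - ((level s)%:~R / N%:R) = q + q.
  have kE : (k%:R : rat) = depth%:R - (level s)%:~R.
    by rewrite natr_absz ger0_norm ?intrB //; lia.
  by rewrite /q /series_exp kE natrM; field; rewrite pnatr_eq0 -lt0n.
apply: initial_term_lowest_exp (initial_term_mulPS init_x init_x) _.
by rewrite mulf_neq0 // Del_coef; lia.
Qed.

End UltrametricCurve.

Lemma floor_approx (R : realType) (x e : R) (N : nat) : 1 < e * N%:R ->
  `|x - (Num.floor (N%:R * x))%:~R / N%:R| < e.
Proof.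
move=> eN_gt1; have N_gt0 : 0 < N%:R :> R.
  by rewrite ltr0n lt0n; apply: contraTneq eN_gt1 => ->; rewrite mulr0 ltr10.
have := floor_le (N%:R * x); have := floorD1_gt (N%:R * x); rewrite intrD.
set z := (Num.floor _)%:~R => lt_z le_z.
have -> : x - z / N%:R = (N%:R * x - z) / N%:R by field; rewrite lt0r_neq0.
rewrite ger0_norm ?divr_ge0 ?subr_ge0 ?(ltW N_gt0) // ltr_pdivrMr //; lra.
Qed.

Lemma U_sub_trop_CM (R : realType) n : U (R:=R) (n:=n) `<=` trop (@CM R n).
Proof.
move=> d d_ultra e e_gt0.
pose N := (Num.truncn e^-1).+1.
have eN_gt1 : 1 < e * N%:R.
  by rewrite mulrC -ltr_pdivrMr // div1r; apply: truncnS_gt.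
exists (fun s => ratr ((level d N s)%:~R / N%:R)); split.
  exists (curve d N); split; first exact: curve_in_zero_locus.
  by exists (fun s => (level d N s)%:~R / N%:R); split=> // s; apply: curve_lowest_exp.
by move=> s; rewrite fmorph_div rmorph_int rmorph_nat; apply: floor_approx.
Qed.

Theorem proposition2p1 (R : realType) (n : nat) :
  (2 <= n)%N -> trop (@CM R n) = @U R n.
Proof.
move=> _; apply/seteqP; split; [exact: trop_CM_sub_U | exact: U_sub_trop_CM].
Qed.
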